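(* Let $k\ge 2$ be an even integer. In the maximum-cardinality online bipartite matching problem under vertex arrivals with a hard budget of $k$ reassignments per arrival (defined in the context), the shortest-augmenting-path algorithm described in the context is $(1-\frac{2}{k+2})$-competitive: on every instance, the matching it outputs has cardinality at least $(1-\frac{2}{k+2})\cdot\mathsf{OPT}$, where $\mathsf{OPT}$ is the maximum cardinality of a matching in the revealed graph.
   Context: Problem: There is a bipartite graph $G=(L\cup R,E)$. The algorithm initially knows only $R$ and the budget $k$. Over $|L|$ timesteps, the vertices of $L$ arrive one at a time; when a vertex arrives, all its incident edges are revealed. At the end of each timestep the algorithm must output a matching in the graph revealed so far. The new matching $M_2$ must be obtainable from the previous matching $M_1$ (the empty matching before the first timestep) by at most $k$ (re)assignments, where the number of (re)assignments is the number of vertices having nonzero degree in $M_1\triangle M_2$ (each vertex whose partner changes counts once). Moreover, once a vertex is matched it must remain matched at all later timesteps. A matching's size is its number of edges. Given a matching $M$, a vertex is exposed if no edge of $M$ is incident to it; an augmenting path with respect to $M$ is a path between two distinct exposed vertices whose edges alternate between edges not in $M$ and edges in $M$; its length is its number of edges. Algorithm: when a vertex $u$ arrives, among all augmenting paths in the current graph with respect to the current matching $M$ that contain $u$, choose a shortest one $P$; if no such path exists or its length exceeds $k-1$, keep $M$; otherwise output $M\triangle P$. *)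

From mathcomp Require Import all_boot all_order all_algebra.
Set Implicit Arguments. Unset Strict Implicit. Unset Printing Implicit Defensive.

(* Online bipartite matching with vertex arrivals.
   L = 'I_n (vertex t is the (t+1)-th arriving vertex), R : finType,
   E u r  <=>  {u, r} is an edge of G.  Edges are pairs (u, r). *)
Section Online.
Variables (n : nat) (R : finType) (E : 'I_n -> R -> bool).

Definition edge := ('I_n * R)%type.
Definition vert := ('I_n + R)%type.

Definition revealed (t : nat) (e : edge) : bool := (e.1 < t) && E e.1 e.2.

Definition incident (e : edge) (x : vert) : bool :=
  match x with inl u => e.1 == u | inr r => e.2 == r end.

Definition is_matching (t : nat) (M : {set edge}) : bool :=
  [forall e in M, revealed t e] &&
  [forall e1 in M, forall e2 in M, (e1 != e2) ==> (e1.1 != e2.1) && (e1.2 != e2.2)].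

Definition exposed (M : {set edge}) (x : vert) : bool :=
  [forall e in M, ~~ incident e x].

Definition edge_of (x y : vert) : option edge :=
  match x, y with
  | inl u, inr r => Some (u, r)
  | inr r, inl u => Some (u, r)
  | _, _ => None
  end.

Fixpoint alternating (t : nat) (M : {set edge}) (b : bool) (x : vert) (p : seq vert) : bool :=
  match p with
  | [::] => true
  | y :: p' =>
      match edge_of x y with
      | Some e => [&& revealed t e, (e \in M) == b & alternating t M (~~ b) y p']
      | None => false
      end
  end.

Fixpoint path_edges (x : vert) (p : seq vert) : seq edge :=
  match p with
  | [::] => [::]
  | y :: p' =>
      match edge_of x y with
      | Some e => e :: path_edges y p'
      | None => path_edges y p'
      end
  end.

(* Its length is size p. *)
Definition augmenting (t : nat) (M : {set edge}) (x : vert) (p : seq vert) : bool :=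
  [&& p != [::], uniq (x :: p), exposed M x, exposed M (last x p)
    & alternating t M false x p].

Definition contains (x : vert) (p : seq vert) (v : vert) : bool := v \in x :: p.

Definition symdiff (A B : {set edge}) : {set edge} := (A :\: B) :|: (B :\: A).

(* One step of the algorithm upon the arrival of vertex t (graph revealed
   after t.+1 arrivals): M' is a possible output given current matching M. *)
Definition alg_step (k : nat) (t : 'I_n) (M M' : {set edge}) : Prop :=
  let u := (inl t : vert) in
  (exists x p,
      [/\ augmenting t.+1 M x p, contains x p u,
          (forall x' p', augmenting t.+1 M x' p' -> contains x' p' u ->
                         size p <= size p'),
          size p <= k - 1
        & M' = symdiff M [set e in path_edges x p]])
  \/
  ((forall x p, augmenting t.+1 M x p -> contains x p u -> k - 1 < size p)
   /\ M' = M).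

(* Ms is a run of the algorithm: Ms 0 is empty, Ms t.+1 is the output at the
   end of timestep t+1. *)
Definition alg_run (k : nat) (Ms : nat -> {set edge}) : Prop :=
  Ms 0 = set0 /\ forall t : 'I_n, alg_step k t (Ms t) (Ms t.+1).

Definition OPT (t : nat) : nat := \max_(M : {set edge} | is_matching t M) #|M|.

End Online.

(** The algorithm keeps the invariant that every augmenting path of its current
  matching has at least [k] edges.  When [u] arrives, an augmenting path avoiding [u]
  already existed before, so it is long.  After augmenting along a shortest augmenting
  path [P] through [u], an augmenting path [Q] of the new matching gives [P Δ Q], which
  contains two vertex-disjoint augmenting paths of the old matching of total length at
  most [|P| + |Q|] (Hopcroft-Karp); one of them avoids [u], so [|Q| >= k].
  Conversely, if all augmenting paths of [M] have at least [k] edges and [N] is a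
  maximum matching, then [M Δ N] contains [|N| - |M|] disjoint augmenting paths, each
  with at least [k/2] edges of [M], whence [(k/2)(|N| - |M|) <= |M|], which for even [k]
  is [|M| >= (1 - 2/(k+2)) |N|]. *)

From mathcomp Require Import all_boot all_order all_algebra.
From mathcomp Require Import zify ring.
Import Order.TTheory GRing.Theory Num.Theory.
Set Implicit Arguments. Unset Strict Implicit. Unset Printing Implicit Defensive.

(** * Matchings and alternating paths *)

Lemma disjoint_setDC (T : finType) (A B : {set T}) : [disjoint A :\: B & B :\: A].
Proof.
by rewrite -setI_eq0; apply/eqP/setP => e; rewrite !inE; case: (e \in A); case: (e \in B).
Qed.

Section Matchings.
Variables (n : nat) (R : finType).
Local Notation edge := (edge n R).
Local Notation vert := (vert n R).

Lemma edge_ofP (x y : vert) e : edge_of x y = Some e ->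
  [/\ incident e x, incident e y, x != y & forall v, incident e v -> v = x \/ v = y].
Proof.
case: x => [u|r]; case: y => [u'|r'] //= [<-] /=; split; rewrite ?eqxx //;
  case=> [w|w] /= /eqP ->; auto.
Qed.

Lemma incident_edge_of (e : edge) (v : vert) : incident e v -> exists w, edge_of v w = Some e.
Proof.
case: e => u r; case: v => [u'|r'] /= /eqP <-; [exists (inr r) | exists (inl u)]; by [].
Qed.

Definition matching (S : {set edge}) := forall e1 e2 (v : vert), e1 \in S -> e2 \in S ->
  incident e1 v -> incident e2 v -> e1 = e2.

Lemma matching_subset (A B : {set edge}) : A \subset B -> matching B -> matching A.
Proof. by move=> /subsetP sAB H e1 e2 v /sAB h1 /sAB h2; apply: H. Qed.

Lemma card_matching_fst (S : {set edge}) : matching S -> #|[set e.1 | e in S]| = #|S|.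
Proof.
move=> H; apply: card_in_imset => e1 e2 h1 h2 eq.
by apply: (H _ _ (inl e1.1)) => //=; rewrite ?eq eqxx.
Qed.

Lemma in_symdiff (A B : {set edge}) e : (e \in symdiff A B) = (e \in A) (+) (e \in B).
Proof. by rewrite /symdiff !inE; case: (e \in A); case: (e \in B). Qed.

Lemma exposedP (M : {set edge}) (x : vert) e : exposed M x -> e \in M -> ~~ incident e x.
Proof. by move/forall_inP => H /H. Qed.

Variable E : 'I_n -> R -> bool.

Lemma is_matchingP t S :
  is_matching E t S <-> {in S, forall e, revealed E t e} /\ matching S.
Proof.
rewrite /is_matching; split.
- move=> /andP [/forall_inP H1 /forall_inP H2]; split => // e1 e2 v h1 h2 i1 i2.
  apply/eqP; apply/negPn/negP => ne.
  have /andP [a b] := implyP (forall_inP (H2 e1 h1) e2 h2) ne.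
  by case: v i1 i2 => [u|r] /= /eqP x /eqP y; rewrite x y eqxx in a b.
- move=> [H1 H2]; apply/andP; split; first by apply/forall_inP.
  apply/forall_inP => e1 h1; apply/forall_inP => e2 h2; apply/implyP => ne.
  apply/andP; split; apply/negP => /eqP eq; move/eqP: ne; apply.
  + by apply: (H2 _ _ (inl e1.1)) => //=; rewrite ?eq eqxx.
  + by apply: (H2 _ _ (inr e1.2)) => //=; rewrite ?eq eqxx.
Qed.

Lemma is_matching0 t : is_matching E t set0.
Proof. by apply/is_matchingP; split => [e|e1 e2 v]; rewrite inE. Qed.

Lemma is_matchingS t M : is_matching E t M -> is_matching E t.+1 M.
Proof.
move/is_matchingP => [r h]; apply/is_matchingP; split => // e /r.
by rewrite /revealed => /andP [h1 ->]; rewrite andbT ltnW.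
Qed.

End Matchings.

Section AlternatingPaths.
Variables (n : nat) (R : finType).
Local Notation edge := (edge n R).
Local Notation vert := (vert n R).
Implicit Types (P Q : bool -> edge -> bool) (b : bool) (x : vert) (p : seq vert).

Fixpoint alt_path P b x p : bool :=
  if p is y :: p' then
    if edge_of x y is Some e then P b e && alt_path P (~~ b) y p' else false
  else true.

Definition in_parity (S : {set edge}) (c : bool) (e : edge) := (e \in S) == c.

Lemma alternatingE E t M b x p : alternating E t M b x p =
  alt_path (fun c e => revealed E t e && in_parity M c e) b x p.
Proof. elim: p b x => //= y p IH b x; case: edge_of => // e; by rewrite IH andbA. Qed.

Lemma sub_alt_path P Q b x p : (forall c e, P c e -> Q c e) ->
  alt_path P b x p -> alt_path Q b x p.
Proof.
move=> PQ; elim: p b x => //= y p IH b x; case: edge_of => // e /andP[h1 h2].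
by rewrite (PQ _ _ h1) (IH _ _ h2).
Qed.

Lemma alt_path_negb P b x p :
  alt_path P b x p -> alt_path (fun c => P (~~ c)) (~~ b) x p.
Proof.
elim: p b x => //= y p IH b x; case: edge_of => // e /andP[h1 h2].
by rewrite negbK h1 /=; have := IH _ _ h2; rewrite negbK.
Qed.

Lemma size_path_edges P b x p : alt_path P b x p -> size (path_edges x p) = size p.
Proof.
elim: p b x => //= y p IH b x; case: edge_of => // e /andP[_ h].
by rewrite /= (IH _ _ h).
Qed.

Lemma alt_path_mem P b x p e : alt_path P b x p -> e \in path_edges x p ->
  exists c, P c e.
Proof.
elim: p b x => //= y p IH b x; case: edge_of => // e' /andP[h1 h2].
by rewrite inE => /orP [/eqP -> | h]; [exists b | exact: IH h2 h].
Qed.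

Lemma alt_path_edge P b x p : alt_path P b x p -> p != [::] ->
  exists e : edge, e \in path_edges x p.
Proof. case: p => // y p /=; case: edge_of => // e _ _; exists e; exact: mem_head. Qed.

Lemma alt_path_nth P b x p (x0 : vert) (e0 : edge) i : alt_path P b x p -> i < size p ->
  edge_of (nth x0 (x :: p) i) (nth x0 (x :: p) i.+1) = Some (nth e0 (path_edges x p) i)
  /\ P (b (+) odd i) (nth e0 (path_edges x p) i).
Proof.
elim: p b x i => //= y p IH b x [|i]; case: edge_of => [e|] // /andP[h1 h2] hi /=.
  by rewrite addbF.
by have [-> h] := IH _ _ i h2 hi; move: h; rewrite addNb addbN.
Qed.

Lemma alt_path_rcons P b x p w : alt_path P b x (rcons p w) =
  alt_path P b x p &&
  (if edge_of (last x p) w is Some e then P (b (+) odd (size p)) e else false).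
Proof.
elim: p b x => [|y p IH] b x /=; first by case: edge_of => [e|]; rewrite ?addbF ?andbT.
by case: edge_of => [e|] //; rewrite IH andbA /= addNb addbN.
Qed.

Lemma count_alt_path P b x p (S : pred edge) (c0 : bool) :
  (forall c e, P c e -> S e = (c == c0)) -> alt_path P b x p ->
  count S (path_edges x p) = if b == c0 then (size p).+1./2 else (size p)./2.
Proof.
move=> PS; elim: p b x => [|y p IH] b x /=; first by case: ifP.
case: edge_of => // e /andP[h1 h2] /=; rewrite (IH _ _ h2) (PS _ _ h1).
by case: (b); case: (c0).
Qed.

End AlternatingPaths.

Lemma mem_nth_consP (T : eqType) (x v : T) (p : seq T) :
  reflect (exists2 i, i <= size p & v = nth x (x :: p) i) (v \in x :: p).
Proof. by apply: (iffP (nthP x)) => [[i hi <-]|[i hi ->]]; exists i. Qed.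

Lemma adjacent_index_parity_inj i m1 m2 : (i == m1) || (i == m1.+1) ->
  (i == m2) || (i == m2.+1) -> odd m1 = odd m2 -> m1 = m2.
Proof.
move=> /orP[]/eqP-> /orP[]/eqP h //.
- by rewrite h /=; case: (odd m2).
- by rewrite -h /=; case: (odd m1).
- by case: h.
Qed.

Lemma path_index_cases j i c : i <= j ->
  [\/ exists m, [/\ m < j, odd m = c & (i == m) || (i == m.+1)],
      i = j /\ odd j = c
    | i = 0 /\ c = true].
Proof.
move=> hij; case hc: (odd i == c).
  case: (ltnP i j) => hi; first by apply: Or31; exists i; rewrite hi (eqP hc) eqxx.
  by apply: Or32; split; [lia | rewrite -(eqP hc); congr odd; lia].
case: i hij hc => [|i] hij hc; first by apply: Or33; case: c hc.
apply: Or31; exists i; split; [lia | | by rewrite eqxx orbT].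
by move: hc => /=; case: (odd i); case: c.
Qed.

Lemma nth_cons_size (T : Type) (x : T) p : nth x (x :: p) (size p) = last x p.
Proof. exact: (nth_last x (x :: p)). Qed.

Section PathGeometry.
Variables (n : nat) (R : finType).
Local Notation edge := (edge n R).
Local Notation vert := (vert n R).
Variables (P : bool -> edge -> bool) (b : bool) (x : vert) (p : seq vert).
Hypothesis hP : alt_path P b x p.
Local Notation s := (x :: p).
Local Notation pes := (path_edges x p).

Lemma incident_nth_path_edge (e0 : edge) m v : m < size p ->
  incident (nth e0 pes m) v -> v = nth x s m \/ v = nth x s m.+1.
Proof.
by move=> hm; have [/edge_ofP [_ _ _ H] _] := alt_path_nth x e0 hP hm; exact: H.
Qed.

Lemma nth_path_edge_incident (e0 : edge) m i : m < size p -> (i == m) || (i == m.+1) ->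
  incident (nth e0 pes m) (nth x s i).
Proof.
move=> hm hi; have [/edge_ofP [h1 h2 _ _] _] := alt_path_nth x e0 hP hm.
by case/orP: hi => /eqP ->.
Qed.

Lemma nth_path_edge_label (e0 : edge) m : m < size p -> P (b (+) odd m) (nth e0 pes m).
Proof. by move=> hm; have [_ h] := alt_path_nth x e0 hP hm. Qed.

Lemma path_edges_nthP (e0 : edge) e : e \in pes -> exists2 m, m < size p & e = nth e0 pes m.
Proof.
move/(nthP e) => [m hm <-]; exists m; first by rewrite -(size_path_edges hP).
by rewrite (set_nth_default e0).
Qed.

Lemma path_edge_incident_mem e v : e \in pes -> incident e v -> v \in s.
Proof.
move=> /(path_edges_nthP e) [m hm ->] /(incident_nth_path_edge hm) [] ->.
all: by apply: mem_nth; rewrite /= ltnS // ltnW.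
Qed.

Lemma path_vertex_edge v : p != [::] -> v \in s -> exists2 e, e \in pes & incident e v.
Proof.
move=> hp /mem_nth_consP [i hi ->].
have [e0 _] := alt_path_edge hP hp.
have [m hm him] : exists2 m, m < size p & (i == m) || (i == m.+1).
  case: (ltnP i (size p)) => h; first by exists i; rewrite ?eqxx.
  have hp0 : 0 < size p by case: (p) hp.
  have -> : i = size p by apply/eqP; rewrite eqn_leq hi h.
  by exists (size p).-1; rewrite prednK // eqxx orbT.
exists (nth e0 pes m); first by rewrite mem_nth // (size_path_edges hP).
exact: nth_path_edge_incident.
Qed.

Hypothesis hu : uniq s.

Lemma incident_nth_path_edge_index (e0 : edge) m i : m < size p -> i <= size p ->
  incident (nth e0 pes m) (nth x s i) -> (i == m) || (i == m.+1).
Proof.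
move=> hm hi /(incident_nth_path_edge hm) [] /eqP; rewrite nth_uniq //= ?ltnS ?(ltnW hm) //.
all: by move/eqP ->; rewrite ?eqxx ?orbT.
Qed.

Lemma nth_path_edges_parity_inj (e0 : edge) m1 m2 v : m1 < size p -> m2 < size p ->
  odd m1 = odd m2 -> incident (nth e0 pes m1) v -> incident (nth e0 pes m2) v -> m1 = m2.
Proof.
move=> hm1 hm2 hodd i1 i2.
have [i [hi him1 hv]] : exists i, [/\ i <= size p, (i == m1) || (i == m1.+1) & v = nth x s i].
  by case: (incident_nth_path_edge hm1 i1) => ->; [exists m1 | exists m1.+1];
    rewrite ?eqxx ?orbT; split => //; lia.
rewrite hv in i2.
exact: adjacent_index_parity_inj him1 (incident_nth_path_edge_index hm2 hi i2) hodd.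
Qed.

Lemma uniq_path_edges : uniq pes.
Proof.
case Hs: pes => [|e0 s'] //; rewrite -Hs.
apply/(uniqP e0) => i j; rewrite !inE (size_path_edges hP) => hi hj eq.
have h1 : incident (nth e0 pes j) (nth x s j) by apply: nth_path_edge_incident; rewrite ?eqxx.
have h2 : incident (nth e0 pes j) (nth x s j.+1).
  by apply: nth_path_edge_incident; rewrite ?eqxx ?orbT.
rewrite -eq in h1 h2.
move/(incident_nth_path_edge_index hi (ltnW hj)): h1.
move/(incident_nth_path_edge_index hi hj): h2; lia.
Qed.

Lemma card_path_edges : #|[set e in pes]| = size p.
Proof.
by rewrite cardsE; have /card_uniqP -> := uniq_path_edges; rewrite (size_path_edges hP).
Qed.

Lemma card_path_edgesI (S : {set edge}) : #|[set e in pes] :&: S| = count (mem S) pes.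
Proof.
have -> : [set e in pes] :&: S = [set e in filter (mem S) pes].
  by apply/setP => e; rewrite !inE mem_filter andbC.
by rewrite cardsE; have /card_uniqP -> := filter_uniq (mem S) uniq_path_edges; rewrite size_filter.
Qed.

End PathGeometry.

Lemma card_symdiff n (R : finType) (A B : {set edge n R}) :
  #|symdiff A B| + 2 * #|A :&: B| = #|A| + #|B|.
Proof.
have lA : #|A :&: B| <= #|A| by apply/subset_leq_card/subsetIl.
have lB : #|A :&: B| <= #|B| by apply/subset_leq_card/subsetIr.
rewrite /symdiff cardsU (disjoint_setI0 (disjoint_setDC A B)) cards0 subn0 !cardsD [B :&: A]setIC; lia.
Qed.

Section SymmetricDifference.
Variables (n : nat) (R : finType).
Local Notation edge := (edge n R).
Local Notation vert := (vert n R).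
Variables (S : {set edge}) (b : bool) (x : vert) (p : seq vert).
Hypotheses (hS : matching S) (hP : alt_path (in_parity S) b x p).
Local Notation pes := (path_edges x p).

Lemma alt_path_inner_closed v e : v \in x :: p -> e \in S -> incident e v ->
  [\/ e \in pes, v = x | v = last x p].
Proof.
move=> /mem_nth_consP [i hi ->] he hinc.
case: (path_index_cases (~~ b) hi) => [[m [hm hodd him]] | [-> _] | [-> _]].
- apply: Or31; have hm_in := nth_path_edge_label hP e hm.
  rewrite /in_parity hodd addbN addbb /= eqb_id in hm_in.
  rewrite (hS he hm_in hinc (nth_path_edge_incident hP e hm him)).
  by rewrite mem_nth // (size_path_edges hP).
- by apply: Or33; rewrite nth_cons_size.
- exact: Or32.
Qed.

Hypothesis hu : uniq (x :: p).

Lemma symdiff_path_matching :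
  (forall e, e \in S -> incident e x || incident e (last x p) -> e \in pes) ->
  matching (symdiff S [set e in pes]).
Proof.
move=> hend.
have closed v e : v \in x :: p -> e \in S -> incident e v -> e \in pes.
  move=> hv he hi; case: (alt_path_inner_closed hv he hi) => [// | hx | hz]; apply: hend => //.
  - by rewrite -hx hi.
  - by rewrite -hz hi orbT.
move=> e1 e2 v; rewrite !in_symdiff !inE.
case h1S: (e1 \in S); case h1p: (e1 \in pes);
case h2S: (e2 \in S); case h2p: (e2 \in pes) => //= _ _ i1 i2.
- exact: hS i1 i2.
- by rewrite (closed v e1 (path_edge_incident_mem hP h2p i2) h1S i1) in h1p.
- by rewrite (closed v e2 (path_edge_incident_mem hP h1p i1) h2S i2) in h2p.
- have [m1 hm1 E1] := path_edges_nthP hP e1 h1p.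
  have [m2 hm2 E2] := path_edges_nthP hP e1 h2p.
  have l1 := nth_path_edge_label hP e1 hm1; have l2 := nth_path_edge_label hP e1 hm2.
  rewrite -E1 /in_parity h1S in l1; rewrite -E2 /in_parity h2S in l2.
  have hodd : odd m1 = odd m2 by move: l1 l2; case: (b); case: (odd m1); case: (odd m2).
  rewrite E1 in i1; rewrite E2 in i2.
  have em := nth_path_edges_parity_inj hP hu hm1 hm2 hodd i1 i2.
  by rewrite E1 E2 em.
Qed.

End SymmetricDifference.

Lemma card_symdiff_odd_path n (R : finType) (S : {set edge n R}) b x p :
  uniq (x :: p) -> alt_path (in_parity S) b x p -> odd (size p) ->
  #|symdiff S [set e in path_edges x p]| + 2 * b = #|S| + 1.
Proof.
move=> hu hP ho; have := card_symdiff S [set e in path_edges x p].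
rewrite (card_path_edges hP hu) setIC (card_path_edgesI hP hu).
rewrite (count_alt_path (c0 := true) _ hP) /=; last by move=> c e /eqP <-; case: (e \in S).
by rewrite uphalf_half -[in size p](odd_double_half (size p)) ho; case: (b) => /=; lia.
Qed.

(** * Alternating components of two disjoint matchings *)

Lemma maximal_extension (T : finType) (cand : seq T -> bool) (a : T) q0 : cand q0 ->
  (forall q, cand q -> uniq (a :: q)) ->
  exists q, [/\ cand q, size q0 <= size q & forall w, ~~ cand (rcons q w)].
Proof.
move=> c0 hu.
have bound q : cand q -> size q < #|T| by move/hu/card_uniqP => /= <-; exact: max_card.
suff H k q : cand q -> #|T| - size q <= k ->
    exists q', [/\ cand q', size q <= size q' & forall w, ~~ cand (rcons q' w)].
  exact: (H _ q0 c0 (leqnn _)).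
elim: k q => [|k IH] q cq hk.
  exists q; split => // w; apply/negP => /bound; rewrite size_rcons; lia.
case: (boolP [forall w, ~~ cand (rcons q w)]) => [/forallP H | /forallPn [w /negPn cw]].
  by exists q.
have := bound _ cw; rewrite size_rcons => hw.
have hk' : #|T| - size (rcons q w) <= k by rewrite size_rcons; lia.
have [q' [c' s' st']] := IH _ cw hk'.
by exists q'; split => //; move: s'; rewrite size_rcons; lia.
Qed.

Section Components.
Variables (n : nat) (R : finType).
Local Notation edge := (edge n R).
Local Notation vert := (vert n R).

Definition in_alt (D F : {set edge}) (c : bool) (e : edge) := e \in (if c then D else F).

Definition closed_path (S : {set edge}) (x : vert) (p : seq vert) :=
  forall v e, v \in x :: p -> e \in S -> incident e v -> e \in path_edges x p.

Section MaximalPath.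
Variables (D F : {set edge}) (a : vert) (q : seq vert).
Hypotheses (hD : matching D) (hF : matching F).
Hypotheses (hP : alt_path (in_alt D F) false a q) (hu : uniq (a :: q)).
Hypothesis ha : forall e, e \in D -> ~~ incident e a.

Lemma in_alt_nth_path_edge i c e m : m < size q -> odd m = c -> (i == m) || (i == m.+1) ->
  e \in (if c then D else F) -> incident e (nth a (a :: q) i) ->
  e = nth e (path_edges a q) m.
Proof.
move=> hm hc him he hi.
have := nth_path_edge_label hP e hm; rewrite /in_alt /= hc => hl.
have hi' := nth_path_edge_incident hP e hm him.
by case: (c) he hl => he hl; [exact: hD he hl hi hi' | exact: hF he hl hi hi'].
Qed.

Local Notation next_side := (if odd (size q) then D else F).

Lemma alt_path_closed :
  (forall e, e \in next_side -> ~~ incident e (last a q)) -> closed_path (D :|: F) a q.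
Proof.
move=> hz v e /mem_nth_consP [i hi ->].
have side c : e \in (if c then D else F) -> incident e (nth a (a :: q) i) ->
    e \in path_edges a q.
  move=> he hinc; case: (path_index_cases c hi) => [[m [hm hc him]] | [hi' hc] | [hi0 hc]].
  - by rewrite (in_alt_nth_path_edge hm hc him he hinc) mem_nth // (size_path_edges hP).
  - by rewrite hi' nth_cons_size in hinc; move: he; rewrite -hc => /hz; rewrite hinc.
  - by rewrite hi0 in hinc; move: he; rewrite hc => /ha; rewrite hinc.
by rewrite inE => /orP [] he; [apply: (side true) | apply: (side false)].
Qed.

Lemma maximal_alt_path_end :
  (forall w, ~~ (uniq (a :: rcons q w) && alt_path (in_alt D F) false a (rcons q w))) ->
  forall e, e \in next_side -> ~~ incident e (last a q).
Proof.
move=> hmax e he; apply/negP => hinc.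
have [w hw] := incident_edge_of hinc.
have [_ iw nzw _] := edge_ofP hw.
move/negP: (hmax w); apply; apply/andP; split; last by rewrite alt_path_rcons hP hw.
rewrite -rcons_cons rcons_uniq hu andbT.
apply/negP => /mem_nth_consP [i hi hwi]; rewrite hwi in iw nzw.
case: (path_index_cases (odd (size q)) hi) => [[m [hm hc him]] | [hi' _] | [hi0 hc]].
- rewrite (in_alt_nth_path_edge hm hc him he iw) -nth_cons_size in hinc.
  have := incident_nth_path_edge_index hP hu hm (leqnn _) hinc.
  case/orP => /eqP hsz; first by rewrite hsz ltnn in hm.
  by move: hc; rewrite hsz /=; case: (odd m).
- by rewrite hi' nth_cons_size eqxx in nzw.
- by rewrite hi0 in iw; move: he; rewrite hc => /ha; rewrite iw.
Qed.

End MaximalPath.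

Lemma closed_path_setD (S : {set edge}) P b x p P' b' a q :
  alt_path P b x p -> closed_path S x p ->
  alt_path P' b' a q -> q != [::] ->
  {subset path_edges a q <= S :\: [set e in path_edges x p]} ->
  closed_path (S :\: [set e in path_edges x p]) a q -> closed_path S a q.
Proof.
move=> hP hcl hQ hq hsub hcl' v e hv he hinc.
case hE : (e \in path_edges x p); last by apply: (hcl' v) => //; rewrite !inE hE.
have hvx := path_edge_incident_mem hP hE hinc.
have [e' he' hinc'] := path_vertex_edge hQ hq hv.
move: (hsub _ he'); rewrite !inE => /andP [/negP hne he'S].
by case: hne; apply: (hcl _ _ hvx he'S hinc').
Qed.

Lemma count_in_alt (D F : {set edge}) a q : [disjoint D & F] ->
  alt_path (in_alt D F) false a q ->
  count (mem F) (path_edges a q) = (size q).+1./2 /\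
  count (mem D) (path_edges a q) = (size q)./2.
Proof.
move=> hdis hP; split.
- apply: (count_alt_path (c0 := false) _ hP) => c e; rewrite /in_alt.
  by case: c => /= he; rewrite ?he // (disjointFr hdis he).
- apply: (count_alt_path (c0 := true) _ hP) => c e; rewrite /in_alt.
  by case: c => /= he; rewrite ?he // (disjointFl hdis he).
Qed.

Lemma exists_uncovered_start (D F : {set edge}) : matching D -> matching F -> #|D| < #|F| ->
  exists u r, (u, r) \in F /\ forall e, e \in D -> ~~ incident e (inl u : vert).
Proof.
move=> hD hF hlt.
have : ~~ ([set e.1 | e in F] \subset [set e.1 | e in D]).
  by apply/negP => /subset_leq_card; rewrite !card_matching_fst //; lia.
case/subsetPn => _ /imsetP [[u r] heF ->] huD; exists u, r; split => // e he.
by apply/negP => /= /eqP hu; move/negP: huD; apply; apply/imsetP; exists e.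
Qed.

Lemma exists_closed_alt_path (D F : {set edge}) :
  matching D -> matching F -> #|D| < #|F| ->
  exists a q, [/\ q != [::], uniq (a :: q), alt_path (in_alt D F) false a q &
    closed_path (D :|: F) a q].
Proof.
move=> hD hF hlt; have [u [r [huF ha]]] := exists_uncovered_start hD hF hlt.
pose cand q := uniq (inl u :: q) && alt_path (in_alt D F) false (inl u) q.
have c0 : cand [:: inr r] by rewrite /cand /= /in_alt /= huF.
have [q [/andP [hu hP] hsz hmax]] := maximal_extension c0 (fun q h => proj1 (andP h)).
exists (inl u), q; split => //; first by case: (q) hsz.
exact: alt_path_closed hD hF hP ha (maximal_alt_path_end hD hF hP hu ha hmax).
Qed.

(* A maximal alternating path starting at a vertex covered by [F] only is a whole
   component of [D :|: F]; if it is even, remove it and recurse. *)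
Lemma exists_alt_component (D F : {set edge}) :
  matching D -> matching F -> [disjoint D & F] -> #|D| < #|F| ->
  exists a q, [/\ q != [::], uniq (a :: q), alt_path (in_alt D F) false a q,
    odd (size q) & closed_path (D :|: F) a q].
Proof.
move: {2}#|F| (leqnn #|F|) => m; elim: m D F => [|m IH] D F hm hD hF hdis hlt; first lia.
have [a [q [hq hu hP hcl]]] := exists_closed_alt_path hD hF hlt.
case ho: (odd (size q)); first by exists a, q.
set Ep := [set e in path_edges a q].
have [hF' hD'] : #|F :&: Ep| = (size q)./2 /\ #|D :&: Ep| = (size q)./2.
  rewrite !(setIC _ Ep) !(card_path_edgesI hP hu); have [-> ->] := count_in_alt hdis hP.
  by rewrite -uphalfE uphalf_half ho.
have lD : #|D :&: Ep| <= #|D| by apply/subset_leq_card/subsetIl.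
have hq2 : 0 < (size q)./2 by rewrite half_gt0; case: (q) hq ho => [|y [|z q']].
have [a' [q' [hq' hu' hP' ho' hcl']]] : exists a' q', [/\ q' != [::], uniq (a' :: q'),
    alt_path (in_alt (D :\: Ep) (F :\: Ep)) false a' q', odd (size q') &
    closed_path ((D :\: Ep) :|: (F :\: Ep)) a' q'].
  apply: IH; rewrite ?cardsD.
  - by move: hm; rewrite hF'; lia.
  - exact: matching_subset (subsetDl _ _) hD.
  - exact: matching_subset (subsetDl _ _) hF.
  - exact: disjointW (subsetDl _ _) (subsetDl _ _) hdis.
  - by rewrite hF' hD'; lia.
exists a', q'; split => //.
  by apply: sub_alt_path hP' => -[] e; rewrite /in_alt inE => /andP [].
apply: (closed_path_setD hP hcl hP' hq'); last by rewrite setDUl.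
move=> e /(alt_path_mem hP') [[] he]; rewrite /in_alt in he;
  by rewrite setDUl inE he ?orbT.
Qed.

End Components.

(** * Augmenting paths *)

Section PathEnds.
Variables (n : nat) (R : finType).
Local Notation edge := (edge n R).
Local Notation vert := (vert n R).
Variables (P : bool -> edge -> bool) (b : bool) (x : vert) (p : seq vert).
Hypothesis hP : alt_path P b x p.
Local Notation pes := (path_edges x p).

Lemma alt_path_head_edge : p != [::] -> exists2 f, f \in pes & P b f /\ incident f x.
Proof.
move=> hp; have [e0 _] := alt_path_edge hP hp; have hp0 : 0 < size p by case: (p) hp.
exists (nth e0 pes 0); first by rewrite mem_nth // (size_path_edges hP).
split; first by have := nth_path_edge_label hP e0 hp0; rewrite addbF.
exact: (nth_path_edge_incident hP e0 (i := 0)).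
Qed.

Lemma alt_path_last_edge : p != [::] ->
  exists2 f, f \in pes & P (b (+) ~~ odd (size p)) f /\ incident f (last x p).
Proof.
move=> hp; have [e0 _] := alt_path_edge hP hp; have hp0 : 0 < size p by case: (p) hp.
have hm : (size p).-1 < size p by rewrite prednK.
exists (nth e0 pes (size p).-1); first by rewrite mem_nth // (size_path_edges hP).
have ho : odd (size p).-1 = ~~ odd (size p) by case: (size p) hp0 => //= k _; rewrite negbK.
split; first by have := nth_path_edge_label hP e0 hm; rewrite ho.
rewrite -nth_cons_size.
by apply: (nth_path_edge_incident hP) => //; rewrite prednK ?eqxx ?orbT.
Qed.

Lemma path_edges_at_end e1 e2 v : uniq (x :: p) -> v = x \/ v = last x p ->
  e1 \in pes -> e2 \in pes -> incident e1 v -> incident e2 v -> e1 = e2.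
Proof.
move=> hu hv /(path_edges_nthP hP e1) [m1 hm1 ->] /(path_edges_nthP hP e1) [m2 hm2 ->].
have [i0 [hi0 hv0 hends]] : exists i0, [/\ i0 <= size p, v = nth x (x :: p) i0 &
    i0 = 0 \/ i0 = size p].
  by case: hv => ->; [exists 0 | exists (size p); rewrite nth_cons_size]; split; auto.
rewrite hv0 => /(incident_nth_path_edge_index hP hu hm1 hi0) /orP h1.
move=> /(incident_nth_path_edge_index hP hu hm2 hi0) /orP h2.
by have -> : m1 = m2 by case: h1 h2 => /eqP h1 [] /eqP h2; lia.
Qed.

End PathEnds.

Section AlternatingComponent.
Variables (n : nat) (R : finType).
Local Notation edge := (edge n R).
Local Notation vert := (vert n R).
Variables (M N : {set edge}) (x : vert) (p : seq vert).
Hypothesis hP : alt_path (in_alt (M :\: N) (N :\: M)) false x p.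
Local Notation pes := (path_edges x p).

Lemma alt_component_sub : {subset pes <= symdiff M N}.
Proof.
by move=> e /(alt_path_mem hP) [[] he]; rewrite /in_alt /= in he; rewrite /symdiff inE he ?orbT.
Qed.

Lemma alt_component_parity : alt_path (in_parity N) true x p.
Proof.
apply: sub_alt_path (alt_path_negb hP) => -[] e; rewrite /in_alt /in_parity inE /=.
  by case/andP => _ ->.
by case/andP => /negPf ->.
Qed.

Hypotheses (hN : matching N) (hu : uniq (x :: p)).
Hypotheses (ho : odd (size p)) (hcl : closed_path (symdiff M N) x p).

Lemma alt_component_end v : v = x \/ v = last x p ->
  (forall e, e \in N -> incident e v -> e \in pes) /\ (forall e, e \in M -> ~~ incident e v).
Proof.
move=> hv; have hp : p != [::] by case: (p) ho.
have [f hf [hfF hfv]] : exists2 f, f \in pes & f \in N :\: M /\ incident f v.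
  by case: hv => ->; [have := alt_path_head_edge hP hp | have := alt_path_last_edge hP hp];
    rewrite /in_alt ?ho.
case/setDP: hfF => hfN /negPf hfM.
split=> [e he hev | e he]; first by rewrite (hN he hfN hev hfv).
apply/negP => hev; case heN : (e \in N); first by rewrite (hN heN hfN hev hfv) hfM in he.
have hvp : v \in x :: p by case: hv => ->; rewrite ?mem_head ?mem_last.
have hep : e \in pes by apply: (hcl hvp _ hev); rewrite /symdiff !inE he heN.
by rewrite (path_edges_at_end hP hu hv hep hf hev hfv) hfM in he.
Qed.

End AlternatingComponent.

Section Augmenting.
Variables (n : nat) (R : finType) (E : 'I_n -> R -> bool).
Local Notation edge := (edge n R).
Local Notation vert := (vert n R).
Implicit Types (M N : {set edge}) (x : vert) (p : seq vert).

Lemma augmenting_alt_path t M x p :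
  augmenting E t M x p -> alt_path (in_parity M) false x p.
Proof. by case/and5P => _ _ _ _; rewrite alternatingE; apply: sub_alt_path => c e /andP []. Qed.

Lemma augmenting_revealed t M x p e :
  augmenting E t M x p -> e \in path_edges x p -> revealed E t e.
Proof.
by case/and5P => _ _ _ _; rewrite alternatingE => hP /(alt_path_mem hP) [c /andP []].
Qed.

Lemma augmenting_odd t M x p : augmenting E t M x p -> odd (size p).
Proof.
move=> ha; have /and5P [hp _ _ hz _] := ha.
have [f _ [hf hfz]] := alt_path_last_edge (augmenting_alt_path ha) hp.
apply/negPn/negP => heven; move: hf; rewrite /in_parity heven eqb_id => hfM.
by move: (exposedP hz hfM); rewrite hfz.
Qed.

Lemma card_augmenting_path t M x p :
  augmenting E t M x p -> #|[set e in path_edges x p]| = size p.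
Proof. by move=> ha; case/and5P: (ha) => _ hu _ _ _; exact: card_path_edges (augmenting_alt_path ha) hu. Qed.

Lemma augment_matching t M x p : is_matching E t M -> augmenting E t M x p ->
  is_matching E t (symdiff M [set e in path_edges x p]) /\
  #|symdiff M [set e in path_edges x p]| = #|M|.+1.
Proof.
move=> hM ha; have hP := augmenting_alt_path ha; have ho := augmenting_odd ha.
case/and5P: ha (ha) => _ hu hx hz _ ha.
move/is_matchingP: hM => [rM hM]; split.
- apply/is_matchingP; split.
    move=> e; rewrite in_symdiff inE; case: (boolP (e \in M)) => [/rM // | _ /= he].
    exact: augmenting_revealed ha he.
  apply: (symdiff_path_matching hM hP hu) => e he /orP [] hi.
  + by move: (exposedP hx he); rewrite hi.
  + by move: (exposedP hz he); rewrite hi.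
- by have := card_symdiff_odd_path hu hP ho; rewrite muln0 addn0 addn1.
Qed.

Lemma exists_augmenting_path t M N :
  is_matching E t M -> is_matching E t N -> #|M| < #|N| ->
  exists x p, [/\ augmenting E t M x p, {subset path_edges x p <= symdiff M N},
    closed_path (symdiff M N) x p, is_matching E t (symdiff N [set e in path_edges x p])
    & #|symdiff N [set e in path_edges x p]|.+1 = #|N|].
Proof.
move=> /is_matchingP [rM hM] /is_matchingP [rN hN] hlt.
have hcard : #|M :\: N| < #|N :\: M|.
  have : #|M :&: N| <= #|M| by apply/subset_leq_card/subsetIl.
  by rewrite !cardsD [N :&: M]setIC; lia.
have [x [p [hp hu hP ho hcl]]] := exists_alt_component (matching_subset (subsetDl M N) hM)
  (matching_subset (subsetDl N M) hN) (disjoint_setDC M N) hcard.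
have hsub := alt_component_sub hP.
have hPN := alt_component_parity hP.
have [hNx hMx] := alt_component_end hP hN hu ho hcl (or_introl erefl).
have [hNz hMz] := alt_component_end hP hN hu ho hcl (or_intror erefl).
have hrev e : e \in symdiff M N -> revealed E t e.
  by rewrite in_symdiff; case: (boolP (e \in M)) => [/rM // | _ /rN].
exists x, p; split => //.
- rewrite /augmenting hp hu alternatingE /=; apply/and3P; split.
  + by apply/forall_inP => e; exact: hMx.
  + by apply/forall_inP => e; exact: hMz.
  + apply: sub_alt_path hP => c e he.
    rewrite hrev /=; last by rewrite /symdiff inE; case: (c) he; rewrite /in_alt /= => ->; rewrite ?orbT.
    case: c he; rewrite /in_alt /in_parity inE => /andP [h1 h2].
    * by rewrite h2.
    * by rewrite (negPf h1).
- apply/is_matchingP; split.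
    move=> e; rewrite in_symdiff inE; case: (boolP (e \in N)) => [/rN // | _ /= /hsub].
    exact: hrev.
  by apply: (symdiff_path_matching hN hPN hu) => e he /orP [];
    [exact: hNx | exact: hNz].
- by have := card_symdiff_odd_path hu hPN ho; lia.
Qed.

End Augmenting.

(** * The shortest-augmenting-path algorithm *)

Section Competitive.
Variables (n : nat) (R : finType) (E : 'I_n -> R -> bool).
Local Notation edge := (edge n R).
Local Notation vert := (vert n R).
Implicit Types (M N : {set edge}) (x : vert) (p : seq vert).

Lemma exists_two_augmenting_paths t M N :
  is_matching E t M -> is_matching E t N -> #|M|.+2 <= #|N| ->
  exists x1 p1 x2 p2, [/\ augmenting E t M x1 p1, augmenting E t M x2 p2,
    size p1 + size p2 <= #|symdiff M N| &
    forall v, ~~ (contains x1 p1 v && contains x2 p2 v)].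
Proof.
move=> hM hN hlt.
have [x1 [p1 [ha1 hs1 hcl1 hN1 cN1]]] := exists_augmenting_path hM hN (ltnW hlt).
set P1 := [set e in path_edges x1 p1] in hN1 cN1.
have hlt1 : #|M| < #|symdiff N P1| by lia.
have [x2 [p2 [ha2 hs2 _ _ _]]] := exists_augmenting_path hM hN1 hlt1.
have hs2' e : e \in path_edges x2 p2 -> (e \in symdiff M N) && (e \notin P1).
  move/hs2; rewrite !in_symdiff inE addbA.
  case h1: (e \in path_edges x1 p1); last by rewrite addbF andbT.
  by move: (hs1 e h1); rewrite in_symdiff => ->.
exists x1, p1, x2, p2; split => //.
- rewrite -(card_augmenting_path ha1) -(card_augmenting_path ha2) -cardsUI.
  have -> : P1 :&: [set e in path_edges x2 p2] = set0.
    by apply/setP => e; rewrite !inE; apply/negP => /andP [h1 /hs2'/andP [_]]; rewrite inE h1.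
  rewrite cards0 addn0; apply/subset_leq_card/subsetP => e.
  by case/setUP; rewrite inE; [move/hs1 | case/hs2'/andP].
- move=> v; apply/negP => /andP [hv1 hv2]; have /and5P [hq2 _ _ _ _] := ha2.
  have [e he hev] := path_vertex_edge (augmenting_alt_path ha2) hq2 hv2.
  have /andP [heMN] := hs2' e he; rewrite inE => /negP; apply.
  exact: (hcl1 v).
Qed.

Definition no_augmenting_shorter t M k := forall x p, augmenting E t M x p -> k <= size p.

Lemma no_augmenting_shorter_augment t M k x p (u : vert) :
  is_matching E t M ->
  (forall x' p', augmenting E t M x' p' -> ~~ contains x' p' u -> k <= size p') ->
  augmenting E t M x p ->
  (forall x' p', augmenting E t M x' p' -> contains x' p' u -> size p <= size p') ->
  size p <= k -> no_augmenting_shorter t (symdiff M [set e in path_edges x p]) k.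
Proof.
move=> hM hold ha hmin hk x' p' ha'.
set P := [set e in path_edges x p] in ha' *; set Q := [set e in path_edges x' p'].
have [hM' cM'] := augment_matching hM ha.
have [hN cN] := augment_matching hM' ha'.
have hlt2 : #|M|.+2 <= #|symdiff (symdiff M P) Q| by rewrite cN cM'.
have [x1 [p1 [x2 [p2 [ha1 ha2 hsz hdisj]]]]] := exists_two_augmenting_paths hM hN hlt2.
have hPQ : #|symdiff M (symdiff (symdiff M P) Q)| <= size p + size p'.
  rewrite -(card_augmenting_path ha) -(card_augmenting_path ha').
  apply: leq_trans (_ : #|P :|: Q| <= _); last by rewrite cardsU leq_subr.
  apply: subset_leq_card; apply/subsetP => e; rewrite !in_symdiff in_setU.
  by case: (e \in M); case: (e \in P); case: (e \in Q).
have hge y q : augmenting E t M y q -> size p <= size q.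
  move=> hy; case hc: (contains y q u); first exact: hmin hy hc.
  exact: leq_trans hk (hold _ _ hy (negbT hc)).
have [hc1 | hc2] : ~~ contains x1 p1 u \/ ~~ contains x2 p2 u.
  by apply/orP; rewrite -negb_and.
- by move: (hold _ _ ha1 hc1) (hge _ _ ha2) (leq_trans hsz hPQ); lia.
- by move: (hold _ _ ha2 hc2) (hge _ _ ha1) (leq_trans hsz hPQ); lia.
Qed.

(* Peel augmenting paths off [M Δ N] one at a time: each has at least [k] edges,
   hence at least [k./2] edges of [M :\: N]. *)
Lemma no_augmenting_shorter_card t M N k :
  is_matching E t M -> no_augmenting_shorter t M k -> is_matching E t N ->
  k./2 * (#|N| - #|M|) <= #|M :\: N|.
Proof.
move=> hM hk.
suff H d N' : #|N'| - #|M| <= d -> is_matching E t N' -> k./2 * (#|N'| - #|M|) <= #|M :\: N'|.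
  by move=> hN; exact: H _ _ (leqnn _) hN.
clear N; elim: d N' => [|d IH] N hd hN.
  by rewrite (_ : #|N| - #|M| = 0) ?muln0 //; lia.
case: (leqP #|N| #|M|) => hNM; first by rewrite (_ : #|N| - #|M| = 0) ?muln0 //; lia.
have [x [p [ha hs _ hN' cN']]] := exists_augmenting_path hM hN hNM.
set P := [set e in path_edges x p] in hN' cN'.
have hPM : #|(M :\: N) :&: P| = (size p)./2.
  have /and5P [_ hu _ _ _] := ha; have hP := augmenting_alt_path ha.
  have := count_alt_path (c0 := true) (S := mem M) _ hP; rewrite /= => <-;
    last by move=> c e /eqP <-; case: (e \in M).
  rewrite -(card_path_edgesI hP hu) setIC; apply: eq_card => e; rewrite !inE.
  case: (boolP (e \in path_edges x p)) => //= he; move: (hs e he); rewrite in_symdiff.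
  by case: (e \in M); case: (e \in N).
have hMN : #|M :\: N| = #|M :\: symdiff N P| + #|(M :\: N) :&: P|.
  rewrite -(cardsID P (M :\: N)) addnC; congr (_ + _); apply: eq_card => e.
  rewrite !in_setD in_symdiff; case: (boolP (e \in P)) => [| _]; last by rewrite addbF.
  by rewrite inE => /hs; rewrite in_symdiff; case: (e \in M); case: (e \in N).
have -> : #|N| - #|M| = (#|symdiff N P| - #|M|).+1 by lia.
rewrite mulnS hMN hPM addnC leq_add ?half_leq ?(hk _ _ ha) //.
by apply: IH hN'; lia.
Qed.

Lemma no_augmenting_shorter0 k : no_augmenting_shorter 0 set0 k.
Proof.
move=> x p ha; have /and5P [hp _ _ _ _] := ha.
have [e he] := alt_path_edge (augmenting_alt_path ha) hp.
by have := augmenting_revealed ha he; rewrite /revealed ltn0.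
Qed.

Lemma alternating_prev (u : 'I_n) M b x p : inl u \notin x :: p ->
  alternating E u.+1 M b x p -> alternating E u M b x p.
Proof.
elim: p b x => //= y p IH b x hnin.
case he: edge_of => [e|] //; case/and3P => /andP [hlt hE] hm ha.
apply/and3P; split => //; last by apply: IH ha; move: hnin; rewrite in_cons negb_or => /andP [].
rewrite /revealed hE andbT ltn_neqAle -ltnS hlt andbT.
have [_ _ _ hv] := edge_ofP he.
apply/negP => /eqP /val_inj heu; move/negP: hnin; apply; rewrite -heu.
by case: (hv (inl e.1) (eqxx _)) => ->; rewrite !inE eqxx ?orbT.
Qed.

Lemma augmenting_prev (u : 'I_n) M x p : ~~ contains x p (inl u) ->
  augmenting E u.+1 M x p -> augmenting E u M x p.
Proof.
move=> hc /and5P [h1 h2 h3 h4 h5]; apply/and5P; split => //.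
exact: alternating_prev hc h5.
Qed.

Lemma alg_step_invariant k (u : 'I_n) M M' : alg_step E k u M M' ->
  is_matching E u M -> no_augmenting_shorter u M k ->
  is_matching E u.+1 M' /\ no_augmenting_shorter u.+1 M' k.
Proof.
move=> hstep hM hI; have hM1 := is_matchingS hM.
have hold x p : augmenting E u.+1 M x p -> ~~ contains x p (inl u) -> k <= size p.
  by move=> ha hc; apply: hI; exact: augmenting_prev hc ha.
case: hstep => [[x [p [ha _ hmin hsz ->]]] | [hno ->]].
- split; first exact: (augment_matching hM1 ha).1.
  by apply: (no_augmenting_shorter_augment hM1 hold ha hmin); lia.
- split => // x p ha; case hc: (contains x p (inl u)); first by have := hno _ _ ha hc; lia.
  exact: hold ha (negbT hc).
Qed.

Lemma alg_run_invariant k Ms : alg_run E k Ms -> forall t, t <= n ->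
  is_matching E t (Ms t) /\ no_augmenting_shorter t (Ms t) k.
Proof.
case=> h0 hstep; elim=> [|t IH] ht.
  by rewrite h0; split; [exact: is_matching0 | exact: no_augmenting_shorter0].
have [hM hI] := IH (ltnW ht).
exact: (alg_step_invariant (hstep (Ordinal ht)) hM hI).
Qed.

Lemma exists_OPT_matching t : exists2 N, is_matching E t N & OPT E t = #|N|.
Proof.
have h0 := is_matching0 E t.
exists [arg max_(N > set0 | is_matching E t N) #|N|]; first by case: arg_maxnP.
by rewrite /OPT (bigop.bigmax_eq_arg _ h0).
Qed.

End Competitive.

Local Open Scope ring_scope.

Lemma ratio_le_of_nat (k a b : nat) : (k * a <= (k + 2) * b)%N ->
  (1 - 2%:R / (k + 2)%:R) * a%:R <= b%:R :> rat.
Proof.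
move=> hab; have hk0 : (0 : rat) < (k + 2)%:R by rewrite ltr0n addn2.
have -> : 1 - 2%:R / (k + 2)%:R = k%:R / (k + 2)%:R :> rat.
  by rewrite natrD; field; rewrite -natrD pnatr_eq0 addn2.
by rewrite mulrAC ler_pdivrMr // -!natrM ler_nat [(b * _)%N]mulnC.
Qed.

Theorem theorem1 (k : nat) (hk2 : (2 <= k)%N) (hkeven : ~~ odd k)
  (n : nat) (R : finType) (E : 'I_n -> R -> bool) (Ms : nat -> {set edge n R}) :
  alg_run E k Ms ->
  forall t : nat, (t <= n)%N ->
    (1 - 2%:R / (k + 2)%:R) * (OPT E t)%:R <= (#|Ms t|)%:R :> rat.
Proof.
move=> hrun t ht.
have [hM hshort] := alg_run_invariant hrun ht.
have [N hN ->] := exists_OPT_matching E t.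
apply: ratio_le_of_nat.
have := no_augmenting_shorter_card hM hshort hN.
have : (#|Ms t :\: N| <= #|Ms t|)%N by apply/subset_leq_card/subsetDl.
have : k = (k./2).*2 by rewrite -[LHS]odd_double_half (negbTE hkeven).
nia.
Qed.
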